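(* On race-free networks of the session calculus, justness coincides with strong fairness of components: for every path starting in a race-free network, the path is just if and only if it is SC-fair.
   Context: Session calculus. Fix sets of locations $p,q,r,\dots$, labels $\lambda,\mu$ and recursion variables $X,Y$. Threads: $P ::= \mathbf{end} \mid \bigoplus_{i\in I} p_i!\lambda_i;P_i \mid \sum_{i\in I} p_i?\lambda_i;P_i \mid X \mid \mu X.P$, with $I$ finite (nonempty for $\bigoplus$) and expressions $\mu X.X$, $\mu X.\mu Y.P$ excluded. Networks: $N ::= p[\![P]\!] \mid 0 \mid N\parallel N$; in a network all locations are distinct, all threads are closed, and every location named in a send or receive is a location of $N$. Thread states additionally allow the form $\langle q!\lambda\rangle;P$ (an output already selected); network states are built from located thread states likewise, taken modulo the structural congruence $\equiv$ (associativity, commutativity of $\parallel$, $N\parallel 0\equiv N$). The transition relation is the least relation closed under $\equiv$ containing: (choice) $p[\![\bigoplus_{i\in I}p_i!\lambda_i;P_i]\!]\parallel N \xrightarrow{\tau} p[\![\langle p_k!\lambda_k\rangle;P_k]\!]\parallel N$ for $k\in I$; (unfold) $p[\![\mu X.P]\!]\parallel N\xrightarrow{\tau} p[\![P\{\mu X.P/X\}]\!]\parallel N$; (comm) $p_k[\![\langle q!\lambda_k\rangle;Q]\!]\parallel q[\![\sum_{i\in I}p_i?\lambda_i;P_i]\!]\parallel N \xrightarrow{(p_k,\lambda_k,q)} p_k[\![Q]\!]\parallel q[\![P_k]\!]\parallel N$ for $k\in I$. For a transition $t$, $\mathrm{comp}(t)$ is the single location moving in a $\tau$-transition and $\{p,q\}$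 for a label $(p,\lambda,q)$; $t$ involves $p$ if $p\in\mathrm{comp}(t)$; $t,u$ are concurrent if $\mathrm{comp}(t)\cap\mathrm{comp}(u)=\emptyset$. A path is a network state with a maximal (infinite or ending in a state without outgoing transitions) sequence of transitions. SC: location $p$ is enabled in a state if some transition from it involves $p$; relentlessly enabled on a path if every suffix contains a state where it is enabled. A path $\pi$ is SC-fair if for every suffix $\pi'$ and every location relentlessly enabled on $\pi'$, $\pi'$ contains a transition involving that location. Justness: $\pi$ is just if for every suffix of $\pi$ starting in state $s$ and every transition $t$ enabled in $s$, that suffix contains a transition $u$ not concurrent with $t$. A network state has a race if $N\xrightarrow{(p,\lambda,r)}N'$ and $N\xrightarrow{(q,\mu,r)}N''$ with $p\neq q$ or $N'\neq N''$; a network is race-free if no network state reachable from it has a race. *)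

From Stdlib Require Import List ClassicalEpsilon.
Import ListNotations.

Set Implicit Arguments.

Section Calculus.

Variables (Loc Lbl Var : Type).

(* Thread states.  [TSend l] is  (+)_{i in I} p_i!lambda_i;P_i  and [TRecv l] is
   Sum_{i in I} p_i?lambda_i;P_i, the finite family being listed by [l].
   [TSel q a P] is the thread state <q!a>;P (an output already selected). *)
Inductive thread : Type :=
| TEnd : thread
| TSend : list (Loc * Lbl * thread) -> thread
| TRecv : list (Loc * Lbl * thread) -> thread
| TVar : Var -> thread
| TMu : Var -> thread -> thread
| TSel : Loc -> Lbl -> thread -> thread.

(* A network state: the located thread states, as a partial map from
   locations (distinct by construction) to thread states.  This representation
   is canonical for the structural congruence (assoc., comm., unit 0). *)
Definition net := Loc -> option thread.

Definition finite_net (N : net) : Prop :=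
  exists dom : list Loc, forall p, N p <> None -> In p dom.

(* Substitution P{R/X} (R will always be closed, so no capture can occur). *)
Definition var_eqb (x y : Var) : bool :=
  if excluded_middle_informative (x = y) then true else false.

Fixpoint subst (X : Var) (R : thread) (P : thread) : thread :=
  match P with
  | TEnd => TEnd
  | TSend l => TSend (map (fun '(q, a, Q) => (q, a, subst X R Q)) l)
  | TRecv l => TRecv (map (fun '(q, a, Q) => (q, a, subst X R Q)) l)
  | TVar Y => if var_eqb Y X then R else TVar Y
  | TMu Y Q => if var_eqb Y X then TMu Y Q else TMu Y (subst X R Q)
  | TSel q a Q => TSel q a (subst X R Q)
  end.

(* Transition labels: tau-transitions carry the (single) moving location;
   (p, a, q) is a communication of label a from p to q. *)
Inductive label : Type :=
| LTau : Loc -> label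
| LComm : Loc -> Lbl -> Loc -> label.

Definition comp (t : label) : list Loc :=
  match t with
  | LTau p => [p]
  | LComm p _ q => [p; q]
  end.

Definition involves (t : label) (p : Loc) : Prop := In p (comp t).

Definition concurrent (t u : label) : Prop :=
  forall p, In p (comp t) -> In p (comp u) -> False.

Inductive step : net -> label -> net -> Prop :=
| step_choice : forall (N N' : net) p l q a P,
    N p = Some (TSend l) -> In (q, a, P) l ->
    N' p = Some (TSel q a P) ->
    (forall r, r <> p -> N' r = N r) ->
    step N (LTau p) N'
| step_unfold : forall (N N' : net) p X P,
    N p = Some (TMu X P) ->
    N' p = Some (subst X (TMu X P) P) ->
    (forall r, r <> p -> N' r = N r) ->
    step N (LTau p) N'
| step_comm : forall (N N' : net) p q a Q l P,
    p <> q ->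
    N p = Some (TSel q a Q) ->
    N q = Some (TRecv l) -> In (p, a, P) l ->
    N' p = Some Q -> N' q = Some P ->
    (forall r, r <> p -> r <> q -> N' r = N r) ->
    step N (LComm p a q) N'.

Inductive reachable : net -> net -> Prop :=
| reach_refl : forall N, reachable N N
| reach_step : forall N l N' N'', step N l N' -> reachable N' N'' -> reachable N N''.

Definition has_race (N : net) : Prop :=
  exists p q r a b N' N'',
    step N (LComm p a r) N' /\ step N (LComm q b r) N'' /\ (p <> q \/ N' <> N'').

Definition race_free (N : net) : Prop :=
  forall N', reachable N N' -> ~ has_race N'.

(* Well-formedness of a (syntactic) thread: [bound] are the recursion variables
   in scope, [inN] the locations of the enclosing network. *)
Fixpoint thread_ok (inN : Loc -> Prop) (bound : list Var) (P : thread) : Prop :=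
  match P with
  | TEnd => True
  | TSend l =>
      l <> [] /\
      (fix go (l : list (Loc * Lbl * thread)) : Prop :=
         match l with
         | [] => True
         | (q, _, Q) :: l' => inN q /\ thread_ok inN bound Q /\ go l'
         end) l
  | TRecv l =>
      (fix go (l : list (Loc * Lbl * thread)) : Prop :=
         match l with
         | [] => True
         | (q, _, Q) :: l' => inN q /\ thread_ok inN bound Q /\ go l'
         end) l
  | TVar X => In X bound
  | TMu X Q =>
      match Q with
      | TVar Y => Y <> X
      | TMu _ _ => False
      | _ => True
      end /\ thread_ok inN (X :: bound) Q
  | TSel _ _ _ => False
  end.

Definition is_network (N : net) : Prop :=
  finite_net N /\
  forall p P, N p = Some P -> thread_ok (fun q => N q <> None) [] P.

(* Paths: states [pst i] and transitions [plab i] : pst i --> pst (i+1).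
   [plen = Some n]: finite path with n transitions, ending in pst n;
   [plen = None]: infinite path.  Values beyond the length are irrelevant. *)
Record path : Type := Path {
  pst : nat -> net;
  plab : nat -> label;
  plen : option nat
}.

Definition st_idx (pi : path) (i : nat) : Prop :=
  match plen pi with None => True | Some n => i <= n end.

Definition tr_idx (pi : path) (i : nat) : Prop :=
  match plen pi with None => True | Some n => i < n end.

Definition is_path (pi : path) : Prop :=
  (forall i, tr_idx pi i -> step (pst pi i) (plab pi i) (pst pi (S i))) /\
  (forall n, plen pi = Some n -> forall l N', ~ step (pst pi n) l N').

Definition enabled (p : Loc) (N : net) : Prop :=
  exists l N', step N l N' /\ involves l p.

Definition relentlessly_enabled (pi : path) (k : nat) (p : Loc) : Prop :=
  forall m, k <= m -> st_idx pi m ->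
    exists m', m <= m' /\ st_idx pi m' /\ enabled p (pst pi m').

Definition SC_fair (pi : path) : Prop :=
  forall k, st_idx pi k ->
  forall p, relentlessly_enabled pi k p ->
    exists j, k <= j /\ tr_idx pi j /\ involves (plab pi j) p.

Definition just (pi : path) : Prop :=
  forall k, st_idx pi k ->
  forall t N', step (pst pi k) t N' ->
    exists j, k <= j /\ tr_idx pi j /\ ~ concurrent (plab pi j) t.

End Calculus.

(* Two locality facts about the transition relation drive the proof: a step
   changes only the threads of its components ([step_frame]), and whether a
   step is possible depends only on those threads ([step_local]).  Along a path,
   a transition t that stays concurrent with every transition taken therefore
   remains enabled ([enabling_persists]).

   - SC-fair => just: if no later transition interferes with an enabled t, t
     stays enabled, so every component of t is relentlessly enabled; SC-fairness
     makes the path move such a component, which contradicts concurrency.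
   - just => SC-fair (needs race freedom): if p is relentlessly enabled, pick a
     state where a transition t involving p is enabled; justness yields a first
     later transition u interfering with t.  Up to u, t stays enabled, so t and
     u are two non-concurrent transitions from one (reachable, hence race-free)
     state.  In such a state non-concurrent transitions have the same components
     ([nonconcurrent_incl]), so u involves p. *)

From Stdlib Require Import List Classical ClassicalEpsilon Lia Arith Wf_nat.

Section SessionCalculus.
Variables (Loc Lbl Var : Type).
Notation net := (net Loc Lbl Var).
Notation path := (path Loc Lbl Var).

Lemma step_frame (N N' : net) t x : step N t N' -> ~ In x (comp t) -> N' x = N x.
Proof.
  intros Hs Hx; destruct Hs as [? ? p ? ? ? ? _ _ _ Hr | ? ? p ? ? _ _ Hr
                               | ? ? p q ? ? ? ? _ _ _ _ _ _ Hr];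
    simpl in Hx; apply Hr; intros ->; tauto.
Qed.

Lemma step_local (N N' M : net) t : step N t N' ->
  (forall x, In x (comp t) -> M x = N x) -> exists M', step M t M'.
Proof.
  intros Hs Hag.
  exists (fun x => if excluded_middle_informative (In x (comp t)) then N' x else M x).
  destruct Hs; simpl in Hag;
    [eapply step_choice | eapply step_unfold | eapply step_comm]; eauto; simpl;
    try (rewrite Hag; [eassumption | simpl; tauto]);
    try (destruct excluded_middle_informative as [_ | n];
         [assumption | exfalso; apply n; simpl; tauto]);
    try (intros; destruct excluded_middle_informative as [i |];
         [exfalso; simpl in i; intuition congruence | reflexivity]).
Qed.

Lemma comm_shape (N N' : net) p a q : step N (LComm p a q) N' ->
  (exists Q, N p = Some (TSel q a Q)) /\ (exists l, N q = Some (TRecv l)).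
Proof. inversion 1; subst; eauto. Qed.

Lemma tau_shape (N N' : net) p : step N (LTau Lbl p) N' ->
  (exists l, N p = Some (TSend l)) \/ (exists X P, N p = Some (TMu X P)).
Proof. inversion 1; subst; eauto. Qed.

(* In a state without races, the components of a transition are among those
   of any non-concurrent transition (so, by symmetry, they coincide): two interfering communications must share sender and receiver,
   and no location can take part both in a tau-step and in a communication. *)
Lemma nonconcurrent_incl (M M1 M2 : net) t u :
  ~ has_race M -> step M t M1 -> step M u M2 -> ~ concurrent t u ->
  forall x, In x (comp t) -> In x (comp u).
Proof.
  intros Hrace Ht Hu Hnc.
  assert (Hshared : exists y, In y (comp t) /\ In y (comp u)).
  { apply NNPP; intro Hn; apply Hnc; intros y H1 H2; apply Hn; eauto. }
  destruct Hshared as [y [Hyt Hyu]].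
  destruct t as [p | p a q], u as [p' | p' a' q']; simpl in Hyt, Hyu |- *.
  - intuition congruence.
  - exfalso; apply comm_shape in Hu as [[Q HQ] [l Hl]].
    apply tau_shape in Ht as [[? H] | [? [? H]]];
      destruct Hyt as [<- | []], Hyu as [-> | [-> | []]]; congruence.
  - exfalso; apply comm_shape in Ht as [[Q HQ] [l Hl]].
    apply tau_shape in Hu as [[? H] | [? [? H]]];
      destruct Hyu as [<- | []], Hyt as [-> | [-> | []]]; congruence.
  - assert (Hsame : p = p' /\ q = q').
    { pose proof Ht as Ht0; pose proof Hu as Hu0.
      apply comm_shape in Ht as [[Q HQ] [l Hl]].
      apply comm_shape in Hu as [[Q' HQ'] [l' Hl']].
      destruct Hyt as [<- | [<- | []]], Hyu as [-> | [-> | []]];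
        try (split; congruence); try (exfalso; congruence).
      destruct (classic (p = p')) as [-> | Hne]; [tauto |].
      exfalso; apply Hrace; exists p, p', q, a, a'; do 2 eexists; eauto. }
    destruct Hsame as [<- <-]; tauto.
Qed.

Lemma tr_st (pi : path) i : tr_idx pi i -> st_idx pi i.
Proof. unfold tr_idx, st_idx; destruct (plen pi); auto; lia. Qed.

Lemma st_tr (pi : path) i j : i < j -> st_idx pi j -> tr_idx pi i.
Proof. unfold tr_idx, st_idx; destruct (plen pi); auto; lia. Qed.

Lemma tr_le (pi : path) i j : i <= j -> tr_idx pi j -> tr_idx pi i.
Proof. unfold tr_idx; destruct (plen pi); auto; lia. Qed.

Lemma reachable_snoc (N M M' : net) t : reachable N M -> step M t M' -> reachable N M'.
Proof.
  intros Hr; induction Hr; intros.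
  - eapply reach_step; eauto; apply reach_refl.
  - eapply reach_step; eauto.
Qed.

Lemma path_reachable (pi : path) : is_path pi ->
  forall j, st_idx pi j -> reachable (pst pi 0) (pst pi j).
Proof.
  intros Hp j; induction j as [| j IH]; intros Hj; [apply reach_refl |].
  assert (Htr : tr_idx pi j) by (apply st_tr with (S j); auto).
  eapply reachable_snoc; [apply IH, tr_st; auto | apply (proj1 Hp j Htr)].
Qed.

Lemma components_unchanged (pi : path) k t : is_path pi ->
  forall m, k <= m -> st_idx pi m ->
  (forall i, k <= i < m -> concurrent (plab pi i) t) ->
  forall x, In x (comp t) -> pst pi m x = pst pi k x.
Proof.
  intros Hp m; induction m as [| m IH]; intros Hkm Hm Hc x Hx.
  - replace k with 0 by lia; reflexivity.
  - destruct (Nat.eq_dec k (S m)) as [-> | Hne]; [reflexivity |].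
    assert (Htr : tr_idx pi m) by (apply st_tr with (S m); auto).
    rewrite (step_frame _ _ _ x (proj1 Hp m Htr)).
    + apply IH; auto; [lia | apply tr_st; auto | intros; apply Hc; lia].
    + intro Hin; apply (Hc m) with x; auto; lia.
Qed.

Lemma enabling_persists (pi : path) k m t N' : is_path pi ->
  step (pst pi k) t N' -> k <= m -> st_idx pi m ->
  (forall i, k <= i < m -> concurrent (plab pi i) t) ->
  exists M', step (pst pi m) t M'.
Proof.
  intros Hp Ht Hkm Hm Hc.
  apply step_local with (1 := Ht).
  apply components_unchanged; auto.
Qed.

Lemma first_interference (pi : path) m t :
  (exists j, m <= j /\ tr_idx pi j /\ ~ concurrent (plab pi j) t) ->
  exists j, (m <= j /\ tr_idx pi j /\ ~ concurrent (plab pi j) t) /\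
    forall i, m <= i < j -> concurrent (plab pi i) t.
Proof.
  intros Hex.
  destruct (dec_inh_nat_subset_has_unique_least_element _ (fun n => classic _) Hex)
    as [j [[Hj Hmin] _]].
  exists j; split; [exact Hj |].
  intros i Hi; apply NNPP; intro Hn.
  assert (j <= i) by (apply Hmin; repeat split; try lia; auto;
                      apply tr_le with j; [lia | apply Hj]).
  lia.
Qed.

Lemma SC_fair_just (pi : path) : is_path pi -> SC_fair pi -> just pi.
Proof.
  intros Hp SC k Hk t N' Ht.
  apply NNPP; intro Hno.
  assert (Hconc : forall i, k <= i -> tr_idx pi i -> concurrent (plab pi i) t).
  { intros i H1 H2; apply NNPP; intro; apply Hno; eauto. }
  assert (Hp0 : exists p0, In p0 (comp t)) by (destruct t; simpl; eauto).
  destruct Hp0 as [p0 Hp0].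
  assert (Hrel : relentlessly_enabled pi k p0).
  { intros m Hkm Hm; exists m; repeat split; auto.
    destruct (enabling_persists pi k m t N') as [M' HM']; auto.
    { intros i Hi; apply Hconc; [lia | apply st_tr with m; auto; lia]. }
    exists t, M'; split; auto. }
  destruct (SC k Hk p0 Hrel) as [j [Hkj [Htj Hinv]]].
  exact (Hconc j Hkj Htj p0 Hinv Hp0).
Qed.

Lemma just_SC_fair (pi : path) : is_path pi -> race_free (pst pi 0) ->
  just pi -> SC_fair pi.
Proof.
  intros Hp Hrf J k Hk p Hrel.
  destruct (Hrel k (le_n k) Hk) as [m [Hkm [Hm [t [N' [Ht Hinv]]]]]].
  destruct (first_interference pi m t (J m Hm t N' Ht))
    as [j [[Hmj [Htj Hnc]] Hconc]].
  exists j; repeat split; [lia | exact Htj |].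
  destruct (enabling_persists pi m j t N') as [Mt HMt]; auto; [apply tr_st; auto |].
  apply (nonconcurrent_incl (pst pi j) Mt (pst pi (S j)) t); auto.
  - apply Hrf, path_reachable, tr_st; auto.
  - apply (proj1 Hp j Htj).
  - intros Hc; apply Hnc; intros y H1 H2; exact (Hc y H2 H1).
Qed.

End SessionCalculus.

Theorem mainTheorem6 (Loc Lbl Var : Type) (N : net Loc Lbl Var) (pi : path Loc Lbl Var) :
  is_network N -> race_free N ->
  is_path pi -> pst pi 0 = N ->
  (just pi <-> SC_fair pi).
Proof.
  intros _ Hrf Hp H0; subst N; split.
  - apply just_SC_fair; auto.
  - apply SC_fair_just; auto.
Qed.
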